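(* Let $n,N\ge1$ be integers, $0<p<1$, $0<\epsilon_1,\epsilon_2<1$, and $\beta>0$ with $L=\beta n$ a positive integer, and suppose $\beta\ge\beta_{\mathsf{Th}}$ and $N\ge N_{\mathsf{Th}}$, where $$\beta_{\mathsf{Th}}=\frac{\log_{2}\left(\dfrac{N\left((1+2p-p^2)^n-1\right)}{(\epsilon_1/2^n)^{1/N}}\right)}{n\left(1-\log_2(1+2p-p^2)\right)},\qquad N_{\mathsf{Th}}=\frac{\log_2\left(\left(1+\frac{\epsilon_2}{2^{n}}\right)^{1/n}-1\right)}{\log_2(p)}.$$ Then in the random model described in the context, the expected number of data comparisons performed by the Data-driven Pruning Algorithm is at most $\mathcal{U}_0=N^2 2^n(1+2p-p^2)^n$.
   Context: Model: $M=2^n$, addresses $C=\{0,1\}^n$; each address $\mathbf{x}$ carries a strand $(\mathbf{x},\mathbf{d})$ with data $\mathbf{d}$ independent uniform on $\{0,1\}^L$. Each strand is sent $N$ times through $\mathsf{BEC}(p)$ (each symbol independently erased to $*$ with probability $p$); $\mathcal{Y}$ is the unordered multiset of all $MN$ reads $(\mathbf{y},\mathbf{d}')$. Words $\mathbf{u},\mathbf{v}\in\{0,1,*\}^\ell$ agree, $\mathbf{u}\cong\mathbf{v}$, if they coincide wherever neither is erased; reads agree if both address and data parts agree. Graph $\mathcal{G}$: bipartite, left vertices $C$, right vertices the reads, edge $\mathbf{x}$–$(\mathbf{y},\mathbf{d}')$ iff $\mathbf{x}\cong\mathbf{y}$; $E_{(\mathbf{y},\mathbf{d}')}$ is the set of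 left neighbours of a read in the current graph, and $\mathcal{N}_{(\mathbf{y},\mathbf{d}')}$ (two-hop neighbourhood) is the set of other reads sharing a left neighbour with $(\mathbf{y},\mathbf{d}')$ in the current graph. Data-driven Pruning Algorithm: Start with no read marked pruned. While fewer than $N2^n$ reads are pruned, choose a not-yet-pruned read $(\tilde{\mathbf{y}},\tilde{\mathbf{d}}')$ minimizing $|\mathcal{N}_{(\tilde{\mathbf{y}},\tilde{\mathbf{d}}')}|$ and call PRUNE on it: mark it pruned; for each read $(\mathbf{y},\mathbf{d}')\in\mathcal{N}_{(\tilde{\mathbf{y}},\tilde{\mathbf{d}}')}$ perform one data comparison, i.e. test $(\mathbf{y},\mathbf{d}')\cong(\tilde{\mathbf{y}},\tilde{\mathbf{d}}')$, and put those passing into a set $\mathcal{T}$; if $|\mathcal{T}|=N-1$, let $\mathcal{X}^*=\bigcap_{(\mathbf{y},\mathbf{d}')\in\mathcal{T}}E_{(\mathbf{y},\mathbf{d}')}$, delete every edge between a read of $\mathcal{T}$ and a left vertex outside $\mathcal{X}^*$, and mark all reads of $\mathcal{T}$ pruned. Afterwards a peeling matching procedure (which performs no data comparisons) is run on the resulting graph. The number of data comparisons is the total number of tests $(\mathbf{y},\mathbf{d}')\cong(\tilde{\mathbf{y}},\tilde{\mathbf{d}}')$ performed in all calls of PRUNE. *)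

From HB Require Import structures.
From mathcomp Require Import all_boot all_order all_algebra.
From mathcomp Require Import all_classical all_reals all_analysis.
Set Implicit Arguments. Unset Strict Implicit. Unset Printing Implicit Defensive.
Import Order.TTheory GRing.Theory Num.Theory.
Local Open Scope ring_scope.

Definition addr (n : nat) := {ffun 'I_n -> bool}.
Definition dat (L : nat) := {ffun 'I_L -> bool}.
(* a read is identified by the address of its strand and the copy index j < N
   (this identity is only used to distinguish the elements of the multiset) *)
Definition read_id (n N : nat) := (addr n * 'I_N)%type.
(* erasure pattern of one read: true = symbol erased *)
Definition erasure (n L : nat) := ({ffun 'I_n -> bool} * {ffun 'I_L -> bool})%type.
Definition outcome (n N L : nat) :=
  ({ffun addr n -> dat L} * {ffun read_id n N -> erasure n L})%type.

(* symbol through BEC: None = erasure symbol * *)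
Definition erase_bit (e b : bool) : option bool := if e then None else Some b.

Definition read_addr n N L (w : outcome n N L) (r : read_id n N)
  : {ffun 'I_n -> option bool} :=
  [ffun i => erase_bit ((w.2 r).1 i) (r.1 i)].
Definition read_dat n N L (w : outcome n N L) (r : read_id n N)
  : {ffun 'I_L -> option bool} :=
  [ffun i => erase_bit ((w.2 r).2 i) (w.1 r.1 i)].

Definition agree (I : finType) (u v : {ffun I -> option bool}) : bool :=
  [forall i, (u i == None) || (v i == None) || (u i == v i)].

Definition addr_agree n (x : addr n) (y : {ffun 'I_n -> option bool}) : bool :=
  agree [ffun i => Some (x i)] y.

Definition read_agree n N L (w : outcome n N L) (r r' : read_id n N) : bool :=
  agree (read_addr w r) (read_addr w r') && agree (read_dat w r) (read_dat w r').

(* state: (current edge set of G, set of pruned reads) *)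
Definition state (n N : nat) :=
  ({set (addr n * read_id n N)} * {set read_id n N})%type.

Definition init_adj n N L (w : outcome n N L) : {set (addr n * read_id n N)} :=
  [set e | addr_agree e.1 (read_addr w e.2)].

Definition nbrs n N (adj : {set (addr n * read_id n N)}) (r : read_id n N)
  : {set addr n} := [set x | (x, r) \in adj].

Definition two_hop n N (adj : {set (addr n * read_id n N)}) (r : read_id n N)
  : {set read_id n N} :=
  [set r' | (r' != r) && [exists x, ((x, r) \in adj) && ((x, r') \in adj)]].

(* PRUNE(rt): returns the new state and the number of data comparisons *)
Definition prune n N L (w : outcome n N L) (st : state n N) (rt : read_id n N)
  : state n N * nat :=
  let adj := st.1 in
  let Nb := two_hop adj rt in
  let T := [set r in Nb | read_agree w r rt] in
  let pr1 := rt |: st.2 in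
  if #|T| == N.-1 then
    let X := \bigcap_(r in T) nbrs adj r in
    (([set e in adj | (e.2 \notin T) || (e.1 \in X)], T :|: pr1), #|Nb|)
  else ((adj, pr1), #|Nb|).

Definition valid_sel n N L (sel : outcome n N L -> state n N -> read_id n N) :=
  forall (w : outcome n N L) (st : state n N), (exists r : read_id n N, r \notin st.2) ->
    sel w st \notin st.2 /\
    forall r, r \notin st.2 -> (#|two_hop st.1 (sel w st)| <= #|two_hop st.1 r|)%N.

Fixpoint run n N L (w : outcome n N L)
  (sel : outcome n N L -> state n N -> read_id n N) (fuel : nat) (st : state n N)
  : nat :=
  match fuel with
  | 0 => 0
  | k.+1 =>
    if (#|st.2| < N * 2 ^ n)%N then
      let pc := prune w st (sel w st) in pc.2 + run w sel k pc.1
    else 0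
  end.

(* each iteration prunes at least one new read, so N*2^n iterations suffice *)
Definition comparisons n N L (sel : outcome n N L -> state n N -> read_id n N)
  (w : outcome n N L) : nat :=
  run w sel (N * 2 ^ n) (init_adj w, (finset.set0 : {set read_id n N})).

Definition bw (R : realType) (p : R) (b : bool) : R := if b then p else 1 - p.

Definition prob (R : realType) (p : R) n N L (w : outcome n N L) : R :=
  (\prod_(x : addr n) (2^-1) ^+ L) *
  \prod_(r : read_id n N)
     ((\prod_(i < n) bw p ((w.2 r).1 i)) * \prod_(i < L) bw p ((w.2 r).2 i)).

Definition expected_comparisons (R : realType) (p : R) n N L
  (sel : outcome n N L -> state n N -> read_id n N) : R :=
  \sum_(w : outcome n N L) prob p w * (comparisons sel w)%:R.

Definition log2 (R : realType) (x : R) : R := ln x / ln 2.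

Definition beta_Th (R : realType) (n N : nat) (p eps1 : R) : R :=
  log2 (N%:R * ((1 + 2 * p - p ^+ 2) ^+ n - 1) /
        ((eps1 / 2 ^+ n) `^ (N%:R^-1)))
  / (n%:R * (1 - log2 (1 + 2 * p - p ^+ 2))).

Definition N_Th (R : realType) (n : nat) (p eps2 : R) : R :=
  log2 ((1 + eps2 / 2 ^+ n) `^ (n%:R^-1) - 1) / log2 p.

From HB Require Import structures.
From mathcomp Require Import all_boot all_order all_algebra.
From mathcomp Require Import all_classical all_reals all_analysis.
From mathcomp Require Import ring lra.
Import Order.TTheory GRing.Theory Num.Theory.
Set Implicit Arguments.
Unset Strict Implicit.
Unset Printing Implicit Defensive.
Local Open Scope ring_scope.

(* Every data comparison made by PRUNE on a read r is against a read of the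
   current two-hop neighbourhood of r.  Edges are only ever deleted and every
   call prunes the read it is called on, so the total number of comparisons is
   at most the sum over all reads r of |N_r| in the initial graph.  Two reads
   with a common left neighbour x both agree with x wherever their addresses
   are unerased, hence agree with each other.  For distinct reads r, r' this
   event depends only on their address erasures: it has probability
   prod_i (1 if the addresses of r and r' coincide at i, else 1 - (1-p)^2).
   Summing over the N 2^n reads r' gives N (1 + 2p - p^2)^n for each of the
   N 2^n reads r. *)

Lemma natr_forall (R : comNzRingType) (I : finType) (b : pred I) :
  ([forall i, b i]%:R : R) = \prod_i (b i)%:R.
Proof.
have [/forallP b_all | /forallPn [i /negPf bi]] := boolP [forall i, b i].
  by rewrite big1 // => i _; rewrite b_all.
by rewrite (bigD1 i) //= bi mul0r.
Qed.

Section ProductWeights.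
Variables (R : comNzRingType) (I J : finType) (mu : J -> R).

Lemma sum_mul_eq (F : J -> R) (c : J) : \sum_j F j * (j == c)%:R = F c.
Proof.
by rewrite (bigD1 c) //= eqxx mulr1 big1 ?addr0 // => j /negPf->; rewrite mulr0.
Qed.

Lemma sum_ffun2_prod (G : I -> J -> J -> R) :
  \sum_(f : {ffun I -> J}) \sum_(g : {ffun I -> J})
     (\prod_i mu (f i)) * (\prod_i mu (g i)) * \prod_i G i (f i) (g i) =
  \prod_i \sum_u \sum_v mu u * mu v * G i u v.
Proof.
rewrite (bigA_distr_bigA (fun i u => \sum_v mu u * mu v * G i u v)).
apply: eq_bigr => f _; rewrite (bigA_distr_bigA (fun i v => mu (f i) * mu v * G i (f i) v)).
by apply: eq_bigr => g _; rewrite -!big_split.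
Qed.

Hypothesis mu_sum1 : \sum_j mu j = 1.

Lemma sum_ffun_prod1 : \sum_(f : {ffun I -> J}) \prod_i mu (f i) = 1.
Proof. by rewrite -(bigA_distr_bigA (fun=> mu)) big1. Qed.

Lemma sum_ffun_pin2 (i0 i1 : I) (a b : J) : i0 != i1 ->
  \sum_(f : {ffun I -> J}) (\prod_i mu (f i)) * ((f i0 == a)%:R * (f i1 == b)%:R) =
  mu a * mu b.
Proof.
move=> ne01; have ne10 : i1 != i0 by rewrite eq_sym.
pose pin i j := if i == i0 then (j == a)%:R else if i == i1 then (j == b)%:R else 1 : R.
have pin0 j : pin i0 j = (j == a)%:R by rewrite /pin /= eqxx.
have pin1 j : pin i1 j = (j == b)%:R by rewrite /pin /= (negPf ne10) eqxx.
have pin_else i j : i != i0 -> i != i1 -> pin i j = 1.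
  by rewrite /pin => /negPf-> /negPf->.
have pinE (f : {ffun I -> J}) : \prod_i pin i (f i) = (f i0 == a)%:R * (f i1 == b)%:R.
  rewrite (bigD1 i0) // (bigD1 i1) //= big1 ?mulr1; last by move=> i /andP[]; exact: pin_else.
  by rewrite pin0 pin1.
under eq_bigr => f _ do rewrite -pinE -big_split.
rewrite -(bigA_distr_bigA (fun i j => mu j * pin i j)) /=.
rewrite (bigD1 i0) // (bigD1 i1) //= [X in _ * (_ * X)]big1 ?mulr1.
  under eq_bigr do rewrite pin0; under [X in _ * X]eq_bigr do rewrite pin1.
  by rewrite !sum_mul_eq.
move=> i /andP[h0 h1]; rewrite -[RHS]mu_sum1.
by apply: eq_bigr => j _; rewrite pin_else // mulr1.
Qed.

Lemma sum_ffun_marginal2 (i0 i1 : I) (H : J -> J -> R) : i0 != i1 ->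
  \sum_(f : {ffun I -> J}) (\prod_i mu (f i)) * H (f i0) (f i1) =
  \sum_a \sum_b mu a * mu b * H a b.
Proof.
move=> ne01; have unpinE (f : {ffun I -> J}) : H (f i0) (f i1) =
    \sum_a \sum_b H a b * ((f i0 == a)%:R * (f i1 == b)%:R).
  rewrite -(sum_mul_eq (fun a => H a (f i1)) (f i0)); apply: eq_bigr => a _.
  rewrite -(sum_mul_eq (H a) (f i1)) mulr_suml; apply: eq_bigr => b _.
  by rewrite [f i0 == a]eq_sym [f i1 == b]eq_sym mulrAC mulrA.
under eq_bigr => f _ do rewrite unpinE mulr_sumr.
rewrite exchange_big; apply: eq_bigr => a _ /=.
under eq_bigr => f _ do rewrite mulr_sumr.
rewrite exchange_big; apply: eq_bigr => b _ /=.
under eq_bigr => f _ do rewrite mulrCA.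
by rewrite -mulr_sumr sum_ffun_pin2 // mulrC.
Qed.
End ProductWeights.

Lemma agree_via_addr n (x : addr n) (u v : {ffun 'I_n -> option bool}) :
  addr_agree x u -> addr_agree x v -> agree u v.
Proof.
move=> /forallP xu /forallP xv; apply/forallP => i.
move: (xu i) (xv i); rewrite !ffunE /=.
by case: (u i) => [a|]; case: (v i) => [b|] //= /eqP[<-] /eqP[<-].
Qed.

Section Pruning.
Variables (n N L : nat) (w : outcome n N L).

Lemma card_read_id : #|{: read_id n N}| = (N * 2 ^ n)%N.
Proof. by rewrite card_prod card_ffun card_bool !card_ord mulnC. Qed.

Lemma subset_two_hop (adj adj' : {set addr n * read_id n N}) r :
  adj \subset adj' -> two_hop adj r \subset two_hop adj' r.
Proof.
move=> sub; apply/fintype.subsetP => r'; rewrite !inE => /andP[-> /existsP[x /andP[xr xr']]].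
by apply/existsP; exists x; rewrite !(fintype.subsetP sub).
Qed.

Lemma prune_comparisons st rt : (prune w st rt).2 = #|two_hop st.1 rt|.
Proof. by rewrite /prune; case: ifP. Qed.

Lemma prune_adj_subset st rt : (prune w st rt).1.1 \subset st.1.
Proof.
rewrite /prune; case: ifP => _ //=.
by apply/fintype.subsetP => e; rewrite inE => /andP[].
Qed.

Lemma prune_pruned_subset st rt : rt |: st.2 \subset (prune w st rt).1.2.
Proof. by rewrite /prune; case: ifP => _ //=; apply: finset.subsetUr. Qed.

Lemma exists_unpruned (st : state n N) :
  (#|st.2| < N * 2 ^ n)%N -> exists r, r \notin st.2.
Proof.
move=> small; apply/existsP; move: small; apply: contraTT.
rewrite negb_exists -leqNgt -card_read_id -cardsT => /forallP all_pruned.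
by apply: subset_leq_card; apply/fintype.subsetP => r _; have := all_pruned r; rewrite negbK.
Qed.

Variable sel : outcome n N L -> state n N -> read_id n N.
Hypothesis sel_valid : valid_sel sel.

Lemma run_le_sum_two_hop (adj0 : {set addr n * read_id n N}) fuel (st : state n N) :
  st.1 \subset adj0 ->
  (run w sel fuel st <= \sum_(r | r \notin st.2) #|two_hop adj0 r|)%N.
Proof.
elim: fuel st => [//|k IH] st sub /=; case: ifP => // /exists_unpruned unpruned.
have [sel_new _] := sel_valid w unpruned; set rt := sel w st.
rewrite (bigD1 rt) //= prune_comparisons; apply: leq_add.
  by apply/subset_leq_card/subset_two_hop.
apply: leq_trans (IH _ (fintype.subset_trans (prune_adj_subset _ _) sub)) _.
rewrite [X in (_ <= X)%N]big_mkcond [X in (X <= _)%N]big_mkcond /=.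
apply: leq_sum => r _; case: ifPn => //= r_new.
have : r \notin rt |: st.2.
  by apply: contra r_new; apply: (fintype.subsetP (prune_pruned_subset _ _)).
by rewrite !inE negb_or andbC => ->.
Qed.

Lemma two_hop_init_adj_agree r :
  two_hop (init_adj w) r \subset
  [set r' | (r' != r) && agree (read_addr w r) (read_addr w r')].
Proof.
apply/fintype.subsetP => r'; rewrite !inE => /andP[-> /existsP[x /andP[]]] /=.
by rewrite !inE; apply: agree_via_addr.
Qed.

Lemma comparisons_le_agreeing_pairs :
  (comparisons sel w <=
   \sum_r \sum_(r' | r' != r) agree (read_addr w r) (read_addr w r'))%N.
Proof.
rewrite /comparisons.
apply: leq_trans (run_le_sum_two_hop _ (fintype.subxx _)) _ => /=.
under eq_bigl do rewrite inE.
apply: leq_sum => r _; apply: leq_trans (subset_leq_card (two_hop_init_adj_agree r)) _.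
rewrite -sum1_card [X in (_ <= X)%N]big_mkcond [X in (X <= _)%N]big_mkcond /=.
by apply: leq_sum => r' _; rewrite inE; case: (r' != r); case: agree.
Qed.

End Pruning.

Section ErasureChannel.
Variables (R : realType) (p : R).

Definition bw_prod m (f : {ffun 'I_m -> bool}) : R := \prod_i bw p (f i).

Definition erasure_weight n L (e : erasure n L) : R := bw_prod e.1 * bw_prod e.2.

Lemma sum_bw : \sum_b bw p b = 1.
Proof. by rewrite big_bool /bw /=; ring. Qed.

Lemma sum_bw_prod m : \sum_(f : {ffun 'I_m -> bool}) bw_prod f = 1.
Proof. exact: sum_ffun_prod1 sum_bw. Qed.

Lemma sum_erasure_weight_marginal n L (F : {ffun 'I_n -> bool} -> R) :
  \sum_(e : erasure n L) erasure_weight e * F e.1 = \sum_a bw_prod a * F a.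
Proof.
rewrite -(pair_bigA _ (fun a b => erasure_weight (a, b) * F a)) /=.
apply: eq_bigr => a _; rewrite /erasure_weight /=; under eq_bigr do rewrite mulrAC.
by rewrite -mulr_sumr sum_bw_prod mulr1.
Qed.

Lemma sum_erasure_weight n L : \sum_(e : erasure n L) erasure_weight e = 1.
Proof.
rewrite -(pair_bigA _ (fun a b => erasure_weight (a, b))) /erasure_weight /=.
under eq_bigr do rewrite -mulr_sumr sum_bw_prod mulr1.
exact: sum_bw_prod.
Qed.

Lemma sum_uniform_data n L :
  \sum_(d : {ffun addr n -> dat L}) \prod_(x : addr n) (2^-1 : R) ^+ L = 1.
Proof.
rewrite sumr_const prodr_const !card_ffun !card_bool !card_ord.
rewrite -(mulr_natr _ ((2 ^ L) ^ (2 ^ n))) !natrX -!exprMn.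
by rewrite mulVf ?expr1n // pnatr_eq0.
Qed.

Lemma expect_erasure_pair n N L (r r' : read_id n N)
    (F : erasure n L -> erasure n L -> R) : r != r' ->
  \sum_(w : outcome n N L) prob p w * F (w.2 r) (w.2 r') =
  \sum_a \sum_b erasure_weight a * erasure_weight b * F a b.
Proof.
move=> neq; rewrite -(pair_bigA _ (fun d E => prob p (d, E) * F (E r) (E r'))) /=.
have probE d E : prob p (d, E) * F (E r) (E r') =
    (\prod_(x : addr n) (2^-1) ^+ L) * ((\prod_s erasure_weight (E s)) * F (E r) (E r')).
  by rewrite mulrA.
under eq_bigr => d _ do under eq_bigr => E _ do rewrite probE.
under eq_bigr => d _ do rewrite -mulr_sumr.
rewrite -mulr_suml sum_uniform_data mul1r.
exact: sum_ffun_marginal2 (sum_erasure_weight n L) _ _ _ neq.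
Qed.

Lemma sum_erasure_weight_marginal2 n L
    (G : {ffun 'I_n -> bool} -> {ffun 'I_n -> bool} -> R) :
  \sum_(a : erasure n L) \sum_(b : erasure n L)
     erasure_weight a * erasure_weight b * G a.1 b.1 =
  \sum_a1 \sum_b1 bw_prod a1 * bw_prod b1 * G a1 b1.
Proof.
have inner (a : erasure n L) :
    \sum_(b : erasure n L) erasure_weight a * erasure_weight b * G a.1 b.1 =
    erasure_weight a * \sum_b1 bw_prod b1 * G a.1 b1.
  under eq_bigr do rewrite -mulrA.
  by rewrite -mulr_sumr (sum_erasure_weight_marginal _ (fun b1 => G a.1 b1)).
under eq_bigr do rewrite inner.
rewrite (sum_erasure_weight_marginal _ (fun a1 => \sum_b1 bw_prod b1 * G a1 b1)).
by apply: eq_bigr => a1 _; rewrite mulr_sumr; under eq_bigr do rewrite mulrA.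
Qed.

(* Bits x <> y read through two independent erasures agree iff at least one
   of the two copies is erased. *)
Definition bit_agree_prob (x y : bool) : R := if x == y then 1 else 1 - (1 - p) ^+ 2.

Lemma agree_read_addrE n N L (w : outcome n N L) (r r' : read_id n N) :
  agree (read_addr w r) (read_addr w r') =
  [forall i, [|| (w.2 r).1 i, (w.2 r').1 i | r.1 i == r'.1 i]].
Proof.
apply: eq_forallb => i; rewrite !ffunE /erase_bit.
by case: ((w.2 r).1 i); case: ((w.2 r').1 i).
Qed.

Lemma expect_agree_read_addr n N L (r r' : read_id n N) : r != r' ->
  \sum_(w : outcome n N L) prob p w * (agree (read_addr w r) (read_addr w r'))%:R =
  \prod_i bit_agree_prob (r.1 i) (r'.1 i).
Proof.
move=> neq; under [LHS]eq_bigr do rewrite agree_read_addrE natr_forall.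
rewrite (expect_erasure_pair
  (fun a b => \prod_i ([|| a.1 i, b.1 i | r.1 i == r'.1 i])%:R) neq).
rewrite (sum_erasure_weight_marginal2 _
  (fun a1 b1 => \prod_i ([|| a1 i, b1 i | r.1 i == r'.1 i])%:R)).
rewrite (sum_ffun2_prod (bw p) (fun i u v => ([|| u, v | r.1 i == r'.1 i])%:R)).
apply: eq_bigr => i _; rewrite /bit_agree_prob.
by case: (r.1 i == r'.1 i); rewrite !big_bool /bw /=; ring.
Qed.

Lemma sum_bit_agree_prob n (x : addr n) :
  \sum_(y : addr n) \prod_i bit_agree_prob (x i) (y i) = (1 + 2 * p - p ^+ 2) ^+ n.
Proof.
rewrite -(bigA_distr_bigA (fun i => bit_agree_prob (x i))) /=.
rewrite -[n in RHS]card_ord -prodr_const.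
by apply: eq_bigr => i _; rewrite big_bool /bit_agree_prob; case: (x i) => /=; ring.
Qed.

Lemma sum_reads_bit_agree_prob n N (r : read_id n N) :
  \sum_(r' : read_id n N) \prod_i bit_agree_prob (r.1 i) (r'.1 i) =
  (1 + 2 * p - p ^+ 2) ^+ n *+ N.
Proof.
rewrite -(pair_bigA _ (fun (y : addr n) (_ : 'I_N) =>
  \prod_i bit_agree_prob (r.1 i) (y i))) /=.
by under eq_bigr do rewrite sumr_const card_ord; rewrite sumrMnl sum_bit_agree_prob.
Qed.

Hypothesis p_range : 0 <= p <= 1.

Lemma bw_ge0 b : 0 <= bw p b.
Proof. by case/andP: p_range => p_ge0 p_le1; case: b; rewrite /bw ?subr_ge0. Qed.

Lemma prob_ge0 n N L (w : outcome n N L) : 0 <= prob p w.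
Proof.
apply: mulr_ge0; apply: prodr_ge0 => x _.
  by rewrite exprn_ge0 // invr_ge0.
by apply: mulr_ge0; apply: prodr_ge0 => i _; apply: bw_ge0.
Qed.

Lemma bit_agree_prob_ge0 x y : 0 <= bit_agree_prob x y.
Proof.
rewrite /bit_agree_prob; case: (x == y) => //.
case/andP: p_range => p_ge0 p_le1; rewrite subr_ge0 expr_le1 //; lra.
Qed.

Lemma expected_comparisons_le n N L (sel : outcome n N L -> state n N -> read_id n N) :
  valid_sel sel ->
  expected_comparisons p sel <=
  \sum_(r : read_id n N) \sum_(r' | r' != r) \prod_i bit_agree_prob (r.1 i) (r'.1 i).
Proof.
move=> sel_valid.
have expectE : \sum_(w : outcome n N L) prob p w *
      (\sum_r \sum_(r' | r' != r) agree (read_addr w r) (read_addr w r') : nat)%:R =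
    \sum_(r : read_id n N) \sum_(r' | r' != r) \prod_i bit_agree_prob (r.1 i) (r'.1 i).
  under eq_bigr do rewrite natr_sum mulr_sumr; rewrite exchange_big; apply: eq_bigr => r _.
  under eq_bigr do rewrite natr_sum mulr_sumr; rewrite exchange_big.
  by apply: eq_bigr => r' neq; rewrite expect_agree_read_addr // eq_sym.
rewrite -expectE; apply: ler_sum => w _; rewrite ler_wpM2l ?prob_ge0 // ler_nat.
exact: comparisons_le_agreeing_pairs.
Qed.

End ErasureChannel.

Theorem lemma6 (R : realType) (n N L : nat) (p eps1 eps2 beta : R)
  (sel : outcome n N L -> state n N -> read_id n N) :
  (1 <= n)%N -> (1 <= N)%N ->
  0 < p < 1 -> 0 < eps1 < 1 -> 0 < eps2 < 1 ->
  0 < beta -> (0 < L)%N -> beta * n%:R = L%:R ->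
  beta_Th n N p eps1 <= beta -> N_Th n p eps2 <= N%:R ->
  valid_sel sel ->
  expected_comparisons p sel <= N%:R ^+ 2 * 2 ^+ n * (1 + 2 * p - p ^+ 2) ^+ n.
Proof.
move=> _ _ /andP[p_gt0 p_lt1] _ _ _ _ _ _ _ sel_valid.
have p_range : 0 <= p <= 1 by rewrite !ltW.
apply: le_trans (expected_comparisons_le p_range sel_valid) _.
apply: le_trans (_ : _ <= \sum_(r : read_id n N) \sum_(r' : read_id n N)
                              \prod_i bit_agree_prob p (r.1 i) (r'.1 i)) _.
  apply: ler_sum => r _; rewrite [X in _ <= X](bigD1 r) //= lerDr.
  by apply: prodr_ge0 => i _; apply: bit_agree_prob_ge0.
under eq_bigr do rewrite sum_reads_bit_agree_prob.
rewrite sumr_const card_read_id -mulrnA -(mulr_natl ((1 + 2 * p - p ^+ 2) ^+ n)).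
by rewrite !natrM natrX le_eqVlt; apply/predU1P; left; ring.
Qed.
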